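(* Define a translation $A\mapsto A_{\neg\neg}$ from formulas of QHC to formulas of intuitionistic predicate calculus QH by recursion: atomic problems (including $\bot$) are unchanged; $0_{\neg\neg}=\bot$; each atomic proposition $p(t_1,\dots,t_n)\ne 0$ is sent to $\neg\neg\bar p(t_1,\dots,t_n)$, where $\bar p$ is a problem variable of the same arity assigned injectively to $p$ (and distinct from the problem variables of QHC); intuitionistic connectives and quantifiers are kept; classical $\land,\to,\forall$ become intuitionistic ($(p\to q)_{\neg\neg}=p_{\neg\neg}\to q_{\neg\neg}$, etc.); classical $\lor,\exists$ become intuitionistic and prefixed by $\neg\neg$: $(p\lor q)_{\neg\neg}=\neg\neg(p_{\neg\neg}\lor q_{\neg\neg})$, $(\exists x\,p)_{\neg\neg}=\neg\neg\exists x\,p_{\neg\neg}$; $(!p)_{\neg\neg}=p_{\neg\neg}$; $(?\alpha)_{\neg\neg}=\neg\neg\alpha_{\neg\neg}$. Then if $A_1,\dots,A_n\vdash_{\mathrm{QHC}} A$, we have $(A_1)_{\neg\neg},\dots,(A_n)_{\neg\neg}\vdash_{\mathrm{QH}} A_{\neg\neg}$.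
   Context: QHC is a two-sorted first-order calculus. Its only terms are individual variables. Every formula is either a problem (denoted by Greek letters $\alpha,\beta,\gamma,\dots$) or a proposition (denoted by Latin letters $p,q,\dots$). Atomic formulas are proposition variables $p(t_1,\dots,t_n)$ (of proposition type), problem variables $\pi(t_1,\dots,t_n)$ (of problem type), and the constants $0$ (a proposition, classical falsity) and $\bot$ (a problem, intuitionistic absurdity). Propositions are closed under the classical connectives $\land,\lor,\to$ and quantifiers $\exists,\forall$; problems are closed under the intuitionistic connectives $\land,\lor,\to$ and quantifiers $\exists,\forall$ (the same symbols are used, distinguished by the type of the arguments). $\neg p$ abbreviates $p\to 0$, $\neg\alpha$ abbreviates $\alpha\to\bot$, and $\leftrightarrow$ is defined as usual. There are two type-conversion operators: if $p$ is a proposition then $!p$ is a problem, and if $\alpha$ is a problem then $?\alpha$ is a proposition. Deductive system of QHC: all axioms and rules of classical predicate logic applied to all propositions; all postulates and rules of intuitionistic predicate logic applied to all problems; the rules $p\,/\,!p$ and $\alpha\,/\,?\alpha$; and the schemas $?!p\to p$; $\alpha\to\, !?\alpha$; $!(p\to q)\to(!p\to !q)$; $?(\alpha\to\beta)\to(?\alpha\to ?\beta)$; $!0\to\bot$; $?(\alpha\land\beta)\leftrightarrow ?\alpha\land ?\beta$; $?(\alpha\lor\beta)\leftrightarrow ?\alpha\lor ?\beta$; $?\bot\to 0$; $?\exists x\,\alpha(x)\leftrightarrow\exists x\,?\alpha(x)$; $?\forall x\,\alpha(x)\to\forall x\,?\alpha(x)$ (usual variable side conditions implicit). $\vdash A$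 means $A$ is derivable in QHC; $A\Rightarrow B$ means $\vdash A\to B$ and $A\Leftrightarrow B$ means $\vdash A\leftrightarrow B$ (with $A,B$ of the same type); $A\vdash B$ means $B$ is derivable in QHC from the premise $A$. Notation: $\Box p := ?!p$ (a proposition) and $\nabla\alpha := !?\alpha$ (a problem). QC and QH denote classical and intuitionistic predicate calculus. *)

From Stdlib Require Import List Arith Bool.
Import ListNotations.

(* Individual variables are named by natural numbers; the only terms are
   individual variables.  Predicate symbols (problem / proposition variables)
   are named by natural numbers and applied to a list of individual variables
   (the arity is the length of that list). *)
Definition ivar := nat.

Inductive prob : Type :=
| PVar  : nat -> list ivar -> prob
| PBot  : prob
| PAnd  : prob -> prob -> prob
| POr   : prob -> prob -> prob
| PImp  : prob -> prob -> prob
| PEx   : ivar -> prob -> prob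
| PAll  : ivar -> prob -> prob
| PBang : prop -> prob
with prop : Type :=
| QVar  : nat -> list ivar -> prop
| QZero : prop
| QAnd  : prop -> prop -> prop
| QOr   : prop -> prop -> prop
| QImp  : prop -> prop -> prop
| QEx   : ivar -> prop -> prop
| QAll  : ivar -> prop -> prop
| QQues : prob -> prop.

Inductive formula : Type :=
| FProb : prob -> formula
| FProp : prop -> formula.

Definition PNeg (a : prob) : prob := PImp a PBot.
Definition QNeg (p : prop) : prop := QImp p QZero.
Definition PIff (a b : prob) : prob := PAnd (PImp a b) (PImp b a).
Definition QIff (p q : prop) : prop := QAnd (QImp p q) (QImp q p).

Definition rn (x y : ivar) (t : ivar) : ivar := if Nat.eqb t x then y else t.

Fixpoint pfree (x : ivar) (a : prob) : bool :=
  match a with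
  | PVar _ ts => existsb (Nat.eqb x) ts
  | PBot => false
  | PAnd a b | POr a b | PImp a b => pfree x a || pfree x b
  | PEx z a | PAll z a => negb (Nat.eqb z x) && pfree x a
  | PBang p => qfree x p
  end
with qfree (x : ivar) (p : prop) : bool :=
  match p with
  | QVar _ ts => existsb (Nat.eqb x) ts
  | QZero => false
  | QAnd p q | QOr p q | QImp p q => qfree x p || qfree x q
  | QEx z p | QAll z p => negb (Nat.eqb z x) && qfree x p
  | QQues a => pfree x a
  end.

Definition ffree (x : ivar) (A : formula) : bool :=
  match A with FProb a => pfree x a | FProp p => qfree x p end.

Fixpoint psubst (x y : ivar) (a : prob) : prob :=
  match a with
  | PVar n ts => PVar n (map (rn x y) ts)
  | PBot => PBot
  | PAnd a b => PAnd (psubst x y a) (psubst x y b)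
  | POr a b => POr (psubst x y a) (psubst x y b)
  | PImp a b => PImp (psubst x y a) (psubst x y b)
  | PEx z a => if Nat.eqb z x then PEx z a else PEx z (psubst x y a)
  | PAll z a => if Nat.eqb z x then PAll z a else PAll z (psubst x y a)
  | PBang p => PBang (qsubst x y p)
  end
with qsubst (x y : ivar) (p : prop) : prop :=
  match p with
  | QVar n ts => QVar n (map (rn x y) ts)
  | QZero => QZero
  | QAnd p q => QAnd (qsubst x y p) (qsubst x y q)
  | QOr p q => QOr (qsubst x y p) (qsubst x y q)
  | QImp p q => QImp (qsubst x y p) (qsubst x y q)
  | QEx z p => if Nat.eqb z x then QEx z p else QEx z (qsubst x y p)
  | QAll z p => if Nat.eqb z x then QAll z p else QAll z (qsubst x y p)
  | QQues a => QQues (psubst x y a)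
  end.

Fixpoint pfree_for (y x : ivar) (a : prob) : bool :=
  match a with
  | PVar _ _ | PBot => true
  | PAnd a b | POr a b | PImp a b => pfree_for y x a && pfree_for y x b
  | PEx z a | PAll z a =>
      if Nat.eqb z x then true
      else if Nat.eqb z y then negb (pfree x a) else pfree_for y x a
  | PBang p => qfree_for y x p
  end
with qfree_for (y x : ivar) (p : prop) : bool :=
  match p with
  | QVar _ _ | QZero => true
  | QAnd p q | QOr p q | QImp p q => qfree_for y x p && qfree_for y x q
  | QEx z p | QAll z p =>
      if Nat.eqb z x then true
      else if Nat.eqb z y then negb (qfree x p) else qfree_for y x p
  | QQues a => pfree_for y x a
  end.

(** * Deductive system of QHC, with premises.
    [QHC_deriv G A] : A is derivable in QHC from the premises G
    (premises are used as additional axioms; all rules apply). *)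
Inductive QHC_deriv (G : list formula) : formula -> Prop :=
| qhc_hyp A : In A G -> QHC_deriv G A
| qc_K p q : QHC_deriv G (FProp (QImp p (QImp q p)))
| qc_S p q r : QHC_deriv G (FProp (QImp (QImp p (QImp q r)) (QImp (QImp p q) (QImp p r))))
| qc_andE1 p q : QHC_deriv G (FProp (QImp (QAnd p q) p))
| qc_andE2 p q : QHC_deriv G (FProp (QImp (QAnd p q) q))
| qc_andI p q : QHC_deriv G (FProp (QImp p (QImp q (QAnd p q))))
| qc_orI1 p q : QHC_deriv G (FProp (QImp p (QOr p q)))
| qc_orI2 p q : QHC_deriv G (FProp (QImp q (QOr p q)))
| qc_orE p q r : QHC_deriv G (FProp (QImp (QImp p r) (QImp (QImp q r) (QImp (QOr p q) r))))
| qc_efq p : QHC_deriv G (FProp (QImp QZero p))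
| qc_dne p : QHC_deriv G (FProp (QImp (QNeg (QNeg p)) p))
| qc_allE x y p : qfree_for y x p = true ->
    QHC_deriv G (FProp (QImp (QAll x p) (qsubst x y p)))
| qc_exI x y p : qfree_for y x p = true ->
    QHC_deriv G (FProp (QImp (qsubst x y p) (QEx x p)))
| qc_MP p q : QHC_deriv G (FProp (QImp p q)) -> QHC_deriv G (FProp p) ->
    QHC_deriv G (FProp q)
| qc_allI x p q : qfree x q = false -> QHC_deriv G (FProp (QImp q p)) ->
    QHC_deriv G (FProp (QImp q (QAll x p)))
| qc_exE x p q : qfree x q = false -> QHC_deriv G (FProp (QImp p q)) ->
    QHC_deriv G (FProp (QImp (QEx x p) q))
| qh_K a b : QHC_deriv G (FProb (PImp a (PImp b a)))
| qh_S a b c : QHC_deriv G (FProb (PImp (PImp a (PImp b c)) (PImp (PImp a b) (PImp a c))))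
| qh_andE1 a b : QHC_deriv G (FProb (PImp (PAnd a b) a))
| qh_andE2 a b : QHC_deriv G (FProb (PImp (PAnd a b) b))
| qh_andI a b : QHC_deriv G (FProb (PImp a (PImp b (PAnd a b))))
| qh_orI1 a b : QHC_deriv G (FProb (PImp a (POr a b)))
| qh_orI2 a b : QHC_deriv G (FProb (PImp b (POr a b)))
| qh_orE a b c : QHC_deriv G (FProb (PImp (PImp a c) (PImp (PImp b c) (PImp (POr a b) c))))
| qh_efq a : QHC_deriv G (FProb (PImp PBot a))
| qh_allE x y a : pfree_for y x a = true ->
    QHC_deriv G (FProb (PImp (PAll x a) (psubst x y a)))
| qh_exI x y a : pfree_for y x a = true ->
    QHC_deriv G (FProb (PImp (psubst x y a) (PEx x a)))
| qh_MP a b : QHC_deriv G (FProb (PImp a b)) -> QHC_deriv G (FProb a) ->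
    QHC_deriv G (FProb b)
| qh_allI x a b : pfree x b = false -> QHC_deriv G (FProb (PImp b a)) ->
    QHC_deriv G (FProb (PImp b (PAll x a)))
| qh_exE x a b : pfree x b = false -> QHC_deriv G (FProb (PImp a b)) ->
    QHC_deriv G (FProb (PImp (PEx x a) b))
| j_bang p : QHC_deriv G (FProp p) -> QHC_deriv G (FProb (PBang p))
| j_ques a : QHC_deriv G (FProb a) -> QHC_deriv G (FProp (QQues a))
| j_quesbang p : QHC_deriv G (FProp (QImp (QQues (PBang p)) p))
| j_bangques a : QHC_deriv G (FProb (PImp a (PBang (QQues a))))
| j_bangK p q : QHC_deriv G (FProb (PImp (PBang (QImp p q)) (PImp (PBang p) (PBang q))))
| j_quesK a b : QHC_deriv G (FProp (QImp (QQues (PImp a b)) (QImp (QQues a) (QQues b))))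
| j_bang0 : QHC_deriv G (FProb (PImp (PBang QZero) PBot))
| j_quesand a b : QHC_deriv G (FProp (QIff (QQues (PAnd a b)) (QAnd (QQues a) (QQues b))))
| j_quesor a b : QHC_deriv G (FProp (QIff (QQues (POr a b)) (QOr (QQues a) (QQues b))))
| j_quesbot : QHC_deriv G (FProp (QImp (QQues PBot) QZero))
| j_quesex x a : QHC_deriv G (FProp (QIff (QQues (PEx x a)) (QEx x (QQues a))))
| j_quesall x a : QHC_deriv G (FProp (QImp (QQues (PAll x a)) (QAll x (QQues a)))).

Inductive iform : Type :=
| IVar : nat -> list ivar -> iform
| IBot : iform
| IAnd : iform -> iform -> iform
| IOr  : iform -> iform -> iform
| IImp : iform -> iform -> iform
| IEx  : ivar -> iform -> iform
| IAll : ivar -> iform -> iform.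

Definition INeg (a : iform) : iform := IImp a IBot.

Fixpoint ifree (x : ivar) (a : iform) : bool :=
  match a with
  | IVar _ ts => existsb (Nat.eqb x) ts
  | IBot => false
  | IAnd a b | IOr a b | IImp a b => ifree x a || ifree x b
  | IEx z a | IAll z a => negb (Nat.eqb z x) && ifree x a
  end.

Fixpoint isubst (x y : ivar) (a : iform) : iform :=
  match a with
  | IVar n ts => IVar n (map (rn x y) ts)
  | IBot => IBot
  | IAnd a b => IAnd (isubst x y a) (isubst x y b)
  | IOr a b => IOr (isubst x y a) (isubst x y b)
  | IImp a b => IImp (isubst x y a) (isubst x y b)
  | IEx z a => if Nat.eqb z x then IEx z a else IEx z (isubst x y a)
  | IAll z a => if Nat.eqb z x then IAll z a else IAll z (isubst x y a)
  end.

Fixpoint ifree_for (y x : ivar) (a : iform) : bool :=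
  match a with
  | IVar _ _ | IBot => true
  | IAnd a b | IOr a b | IImp a b => ifree_for y x a && ifree_for y x b
  | IEx z a | IAll z a =>
      if Nat.eqb z x then true
      else if Nat.eqb z y then negb (ifree x a) else ifree_for y x a
  end.

Inductive QH_deriv (G : list iform) : iform -> Prop :=
| ih_hyp A : In A G -> QH_deriv G A
| ih_K a b : QH_deriv G (IImp a (IImp b a))
| ih_S a b c : QH_deriv G (IImp (IImp a (IImp b c)) (IImp (IImp a b) (IImp a c)))
| ih_andE1 a b : QH_deriv G (IImp (IAnd a b) a)
| ih_andE2 a b : QH_deriv G (IImp (IAnd a b) b)
| ih_andI a b : QH_deriv G (IImp a (IImp b (IAnd a b)))
| ih_orI1 a b : QH_deriv G (IImp a (IOr a b))
| ih_orI2 a b : QH_deriv G (IImp b (IOr a b))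
| ih_orE a b c : QH_deriv G (IImp (IImp a c) (IImp (IImp b c) (IImp (IOr a b) c)))
| ih_efq a : QH_deriv G (IImp IBot a)
| ih_allE x y a : ifree_for y x a = true ->
    QH_deriv G (IImp (IAll x a) (isubst x y a))
| ih_exI x y a : ifree_for y x a = true ->
    QH_deriv G (IImp (isubst x y a) (IEx x a))
| ih_MP a b : QH_deriv G (IImp a b) -> QH_deriv G a -> QH_deriv G b
| ih_allI x a b : ifree x b = false -> QH_deriv G (IImp b a) ->
    QH_deriv G (IImp b (IAll x a))
| ih_exE x a b : ifree x b = false -> QH_deriv G (IImp a b) ->
    QH_deriv G (IImp (IEx x a) b).

(** Problem variable pi_n is sent to the QH predicate variable 2n, and the
    problem variable \bar p_n assigned to the proposition variable p_n is the
    QH predicate variable 2n+1 (injective, and distinct from the images of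
    the problem variables of QHC). *)
Fixpoint tr_prob (a : prob) : iform :=
  match a with
  | PVar n ts => IVar (2 * n) ts
  | PBot => IBot
  | PAnd a b => IAnd (tr_prob a) (tr_prob b)
  | POr a b => IOr (tr_prob a) (tr_prob b)
  | PImp a b => IImp (tr_prob a) (tr_prob b)
  | PEx x a => IEx x (tr_prob a)
  | PAll x a => IAll x (tr_prob a)
  | PBang p => tr_prop p
  end
with tr_prop (p : prop) : iform :=
  match p with
  | QVar n ts => INeg (INeg (IVar (2 * n + 1) ts))
  | QZero => IBot
  | QAnd p q => IAnd (tr_prop p) (tr_prop q)
  | QOr p q => INeg (INeg (IOr (tr_prop p) (tr_prop q)))
  | QImp p q => IImp (tr_prop p) (tr_prop q)
  | QEx x p => INeg (INeg (IEx x (tr_prop p)))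
  | QAll x p => IAll x (tr_prop p)
  | QQues a => INeg (INeg (tr_prob a))
  end.

Definition tr (A : formula) : iform :=
  match A with FProb a => tr_prob a | FProp p => tr_prop p end.

From Stdlib Require Import List Arith Bool.
Import ListNotations.

(* The proof is an induction on QHC-derivations: every axiom of QHC is sent
   to a QH-theorem and every rule of QHC is sent to an admissible rule of QH.
   Three ingredients make this work.
   1. Syntax: the translation commutes with substitution of variables and
      preserves free occurrences and the "free for" condition, so that the
      quantifier axioms and rules of QHC translate to those of QH.
   2. A small natural-deduction layer over the Hilbert calculus QH (local
      hypotheses plus a deduction theorem), used to derive the
      double-negation laws of intuitionistic logic.
   3. Stability: the translation of every proposition p satisfies
      ~~p_{~~} -> p_{~~} in QH.  This is what validates classical reasoning
      (double-negation elimination, and the elimination of the ~~-prefixed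
      disjunction and existential quantifier) on translated propositions.
   The QHC-specific schemas for ! and ? then reduce to the facts that ~~
   commutes with conjunction and implication, and (up to ~~) with
   disjunction, the existential and the universal quantifier. *)

Notation nn a := (INeg (INeg a)).

Scheme prob_mut := Induction for prob Sort Prop
with prop_mut := Induction for prop Sort Prop.
Combined Scheme formula_mut from prob_mut, prop_mut.

Lemma tr_subst x y :
  (forall a, tr_prob (psubst x y a) = isubst x y (tr_prob a)) /\
  (forall p, tr_prop (qsubst x y p) = isubst x y (tr_prop p)).
Proof.
  apply formula_mut; intros; simpl; unfold INeg;
    try destruct (Nat.eqb _ x); simpl; unfold INeg; congruence.
Qed.

Lemma tr_free x :
  (forall a, ifree x (tr_prob a) = pfree x a) /\
  (forall p, ifree x (tr_prop p) = qfree x p).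
Proof.
  apply formula_mut; intros; simpl; unfold INeg; simpl;
    rewrite ?orb_false_r; congruence.
Qed.

Lemma tr_free_for y x :
  (forall a, ifree_for y x (tr_prob a) = pfree_for y x a) /\
  (forall p, ifree_for y x (tr_prop p) = qfree_for y x p).
Proof.
  apply formula_mut; intros; simpl; unfold INeg; simpl;
    rewrite ?andb_true_r, ?(proj1 (tr_free x)), ?(proj2 (tr_free x));
    repeat match goal with IH : _ = _ |- _ => rewrite IH; clear IH end;
    reflexivity.
Qed.

Lemma imp_refl G a : QH_deriv G (IImp a a).
Proof.
  eapply ih_MP; [eapply ih_MP; [apply (ih_S G a (IImp a a) a) | apply ih_K] |].
  apply (ih_K G a a).
Qed.

(* No quantifier rule is used
   under local hypotheses, which is why they can be discharged. *)
Inductive mp_deriv (G H : list iform) : iform -> Prop :=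
| mp_local a : In a H -> mp_deriv G H a
| mp_thm a : QH_deriv G a -> mp_deriv G H a
| mp_app a b : mp_deriv G H (IImp a b) -> mp_deriv G H a -> mp_deriv G H b.

Lemma mp_deduction G H h a : mp_deriv G (h :: H) a -> mp_deriv G H (IImp h a).
Proof.
  induction 1 as [a [<- | Ha] | a Ha | a b _ IHab _ IHa].
  - apply mp_thm, imp_refl.
  - eapply mp_app; [apply mp_thm, ih_K | now apply mp_local].
  - eapply mp_app; [apply mp_thm, ih_K | now apply mp_thm].
  - eapply mp_app; [eapply mp_app; [apply mp_thm, ih_S | exact IHab] | exact IHa].
Qed.

Lemma mp_deriv_sound G a : mp_deriv G [] a -> QH_deriv G a.
Proof.
  induction 1 as [a [] | | ]; [assumption | eapply ih_MP; eassumption].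
Qed.

Ltac local := apply mp_local; simpl; repeat (first [left; reflexivity | right]).
Ltac intro_imp := apply mp_deduction.
Ltac by_thm t := eapply mp_app; [apply mp_thm; apply t |].
Ltac by_local_imp a := apply (mp_app _ _ a); [local |].

Lemma mp_and G H a b : mp_deriv G H a -> mp_deriv G H b -> mp_deriv G H (IAnd a b).
Proof.
  intros Ha Hb. eapply mp_app; [| exact Hb].
  eapply mp_app; [apply mp_thm, ih_andI | exact Ha].
Qed.

Lemma mp_or_elim G H a b c :
  mp_deriv G H (IImp a c) -> mp_deriv G H (IImp b c) -> mp_deriv G H (IOr a b) ->
  mp_deriv G H c.
Proof.
  intros Hac Hbc Hab. eapply mp_app; [| exact Hab].
  eapply mp_app; [eapply mp_app; [apply mp_thm, ih_orE | exact Hac] | exact Hbc].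
Qed.

Lemma imp_trans G a b c :
  QH_deriv G (IImp a b) -> QH_deriv G (IImp b c) -> QH_deriv G (IImp a c).
Proof. intros Hab Hbc. apply mp_deriv_sound. intro_imp. by_thm Hbc. by_thm Hab. local. Qed.

Lemma iff_intro G a b :
  QH_deriv G (IImp a b) -> QH_deriv G (IImp b a) ->
  QH_deriv G (IAnd (IImp a b) (IImp b a)).
Proof. intros Hab Hba. apply mp_deriv_sound, mp_and; now apply mp_thm. Qed.

Lemma nn_intro G a : QH_deriv G (IImp a (nn a)).
Proof. apply mp_deriv_sound. intro_imp. intro_imp. by_local_imp a. local. Qed.

Lemma nn_mono G a b : QH_deriv G (IImp a b) -> QH_deriv G (IImp (nn a) (nn b)).
Proof.
  intros Hab. apply mp_deriv_sound. intro_imp. intro_imp.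
  by_local_imp (INeg a). intro_imp. by_local_imp b. by_thm Hab. local.
Qed.

Lemma nn_imp_dist G a b : QH_deriv G (IImp (nn (IImp a b)) (IImp (nn a) (nn b))).
Proof.
  apply mp_deriv_sound. intro_imp. intro_imp. intro_imp.
  by_local_imp (INeg a). intro_imp.
  by_local_imp (INeg (IImp a b)). intro_imp.
  by_local_imp b. by_local_imp a. local.
Qed.

Lemma nn_and_split G a b : QH_deriv G (IImp (nn (IAnd a b)) (IAnd (nn a) (nn b))).
Proof.
  apply mp_deriv_sound. intro_imp. apply mp_and.
  - by_thm nn_mono. apply ih_andE1. local.
  - by_thm nn_mono. apply ih_andE2. local.
Qed.

Lemma nn_and_join G a b : QH_deriv G (IImp (IAnd (nn a) (nn b)) (nn (IAnd a b))).
Proof.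
  apply mp_deriv_sound. intro_imp. intro_imp.
  apply (mp_app _ _ (INeg a)); [by_thm ih_andE1; local |]. intro_imp.
  apply (mp_app _ _ (INeg b)); [by_thm ih_andE2; local |]. intro_imp.
  by_local_imp (IAnd a b). apply mp_and; local.
Qed.

Definition stable (G : list iform) (a : iform) : Prop := QH_deriv G (IImp (nn a) a).

Lemma neg_stable G a : stable G (INeg a).
Proof.
  apply mp_deriv_sound. intro_imp. intro_imp.
  by_local_imp (nn a). by_thm nn_intro. local.
Qed.

Lemma bot_stable G : stable G IBot.
Proof.
  apply mp_deriv_sound. intro_imp. by_local_imp (INeg IBot). apply mp_thm, imp_refl.
Qed.

Lemma and_stable G a b : stable G a -> stable G b -> stable G (IAnd a b).
Proof.
  intros Ha Hb. apply mp_deriv_sound. intro_imp.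
  apply mp_and.
  - by_thm Ha. by_thm ih_andE1. by_thm nn_and_split. local.
  - by_thm Hb. by_thm ih_andE2. by_thm nn_and_split. local.
Qed.

Lemma imp_stable G a b : stable G b -> stable G (IImp a b).
Proof.
  intros Hb. apply mp_deriv_sound. intro_imp. intro_imp.
  by_thm Hb. apply (mp_app _ _ (nn a)).
  - by_thm nn_imp_dist. local.
  - by_thm nn_intro. local.
Qed.

Lemma nn_orI1 G a b : QH_deriv G (IImp a (nn (IOr a b))).
Proof. eapply imp_trans; [apply ih_orI1 | apply nn_intro]. Qed.

Lemma nn_orI2 G a b : QH_deriv G (IImp b (nn (IOr a b))).
Proof. eapply imp_trans; [apply ih_orI2 | apply nn_intro]. Qed.

Lemma nn_or_elim G a b c :
  stable G c -> QH_deriv G (IImp (IImp a c) (IImp (IImp b c) (IImp (nn (IOr a b)) c))).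
Proof.
  intros Hc. apply mp_deriv_sound. intro_imp. intro_imp. intro_imp.
  by_thm Hc. intro_imp. by_local_imp (INeg (IOr a b)). intro_imp.
  by_local_imp c. apply (mp_or_elim _ _ a b); local.
Qed.

Lemma nn_or_regroup G a b :
  QH_deriv G (IAnd (IImp (nn (IOr a b)) (nn (IOr (nn a) (nn b))))
                   (IImp (nn (IOr (nn a) (nn b))) (nn (IOr a b)))).
Proof.
  apply iff_intro.
  - apply nn_mono, mp_deriv_sound. intro_imp. apply (mp_or_elim _ _ a b); [| | local].
    + intro_imp. by_thm ih_orI1. by_thm nn_intro. local.
    + intro_imp. by_thm ih_orI2. by_thm nn_intro. local.
  - eapply ih_MP; [eapply ih_MP; [apply nn_or_elim, neg_stable |] |];
      apply nn_mono; [apply ih_orI1 | apply ih_orI2].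
Qed.

Lemma isubst_id x a : isubst x x a = a.
Proof.
  assert (Hrn : forall ts, map (rn x x) ts = ts).
  { intros ts. transitivity (map (fun t => t) ts); [| apply map_id].
    apply map_ext_in. intros t _. unfold rn.
    destruct (Nat.eqb_spec t x); congruence. }
  induction a; simpl; try destruct (Nat.eqb _ x); congruence.
Qed.

Lemma ifree_for_refl x a : ifree_for x x a = true.
Proof. induction a; simpl; rewrite ?IHa1, ?IHa2; try destruct (Nat.eqb _ x); auto. Qed.

Lemma allE_self G x a : QH_deriv G (IImp (IAll x a) a).
Proof. rewrite <- (isubst_id x a) at 2. apply ih_allE, ifree_for_refl. Qed.

Lemma exI_self G x a : QH_deriv G (IImp a (IEx x a)).
Proof. rewrite <- (isubst_id x a) at 1. apply ih_exI, ifree_for_refl. Qed.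

Lemma all_stable G x a : stable G a -> stable G (IAll x a).
Proof.
  intros Ha. apply ih_allI; [simpl; now rewrite Nat.eqb_refl |].
  eapply imp_trans; [apply nn_mono, allE_self | exact Ha].
Qed.

Lemma nn_all_dist G x a : QH_deriv G (IImp (nn (IAll x a)) (IAll x (nn a))).
Proof. apply ih_allI; [simpl; now rewrite Nat.eqb_refl | apply nn_mono, allE_self]. Qed.

Lemma nn_exI G x y a :
  ifree_for y x a = true -> QH_deriv G (IImp (isubst x y a) (nn (IEx x a))).
Proof. intros Hy. eapply imp_trans; [apply ih_exI, Hy | apply nn_intro]. Qed.

Lemma nn_ex_elim G x a b :
  ifree x b = false -> stable G b -> QH_deriv G (IImp a b) ->
  QH_deriv G (IImp (nn (IEx x a)) b).
Proof.
  intros Hx Hb Hab. eapply imp_trans; [apply nn_mono, ih_exE; eassumption | exact Hb].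
Qed.

Lemma nn_ex_regroup G x a :
  QH_deriv G (IAnd (IImp (nn (IEx x a)) (nn (IEx x (nn a))))
                   (IImp (nn (IEx x (nn a))) (nn (IEx x a)))).
Proof.
  apply iff_intro.
  - apply nn_mono, ih_exE; [simpl; now rewrite Nat.eqb_refl |].
    eapply imp_trans; [apply nn_intro | apply exI_self].
  - apply nn_ex_elim; [simpl; now rewrite Nat.eqb_refl | apply neg_stable |].
    apply nn_mono, exI_self.
Qed.

Lemma tr_prop_stable G p : stable G (tr_prop p).
Proof.
  induction p; simpl;
    auto using neg_stable, bot_stable, and_stable, imp_stable, all_stable.
Qed.

(* After pushing the translation
   through substitution, freeness and the "free for" side conditions, every
   axiom of QHC is an instance of a QH axiom or of one of the lemmas above
   (nn_or_elim and nn_ex_elim for the classical rules on disjunction and the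
   existential quantifier, tr_prop_stable for double-negation elimination,
   the ~~-commutation lemmas for the schemas on ! and ?), and every rule of
   QHC becomes modus ponens or a quantifier rule of QH; the rules p / !p and
   alpha / ?alpha become the identity and ~~-introduction. *)
Theorem theorem3p4 (Gamma : list formula) (A : formula) :
  QHC_deriv Gamma A -> QH_deriv (map tr Gamma) (tr A).
Proof.
  induction 1; simpl in *;
    rewrite ?(proj1 (tr_subst _ _)), ?(proj2 (tr_subst _ _));
    rewrite <- ?(proj1 (tr_free _)), <- ?(proj2 (tr_free _)),
      <- ?(proj1 (tr_free_for _ _)), <- ?(proj2 (tr_free_for _ _)) in *.
  all: eauto using ih_hyp, in_map, ih_K, ih_S, ih_andE1, ih_andE2, ih_andI,
    ih_orI1, ih_orI2, ih_orE, ih_efq, ih_allE, ih_exI, ih_MP, ih_allI, ih_exE,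
    imp_refl, nn_intro, nn_orI1, nn_orI2, nn_or_elim, tr_prop_stable, nn_exI,
    nn_ex_elim, nn_imp_dist, iff_intro, nn_and_split, nn_and_join,
    nn_or_regroup, nn_ex_regroup, nn_all_dist.
  all: apply tr_prop_stable.
Qed.
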